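(* Let $n\ge 1$, let $c\in\mathbb{R}^n$ with $c_1\ge c_2\ge\cdots\ge c_n\ge 0$, and let $u\in\mathbb{R}^n$ with $u_i>0$ for all $i$. Let $f(x)=\frac12\left(\sum_{i=1}^n x_i\right)^2-\sum_{i=1}^n c_ix_i$. For $k=0,1,\dots,n$ let $U_k=\sum_{i=1}^k u_i$ (so $U_0=0$) and let $x^{(k)}\in\mathbb{R}^n$ be the vector with $x^{(k)}_i=u_i$ for $i\le k$ and $x^{(k)}_i=0$ for $i>k$ (so $x^{(0)}=0$). For $k=1,\dots,n$ let \[ G_k=\tfrac12\left(U_k+U_{k-1}\right)-c_k=U_{k-1}+\tfrac12u_k-c_k . \] Then: (i) If $\bar n$ is the smallest index in $\{1,\dots,n\}$ such that $G_{\bar n}\ge 0$, then $\min_{i=0,1,\dots,n} f(x^{(i)})=f(x^{(\bar n-1)})$. (ii) If $G_k<0$ for all $k=1,\dots,n$, then $\min_{i=0,1,\dots,n} f(x^{(i)})=f(x^{(n)})$.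
   Context: The vectors $x^{(k)}$ fill the coordinates $1,\dots,k$ to their upper bounds $u_i$ and leave the rest at $0$. *)

From mathcomp Require Import all_boot all_order all_algebra.
Set Implicit Arguments. Unset Strict Implicit. Unset Printing Implicit Defensive.
Import Order.TTheory GRing.Theory Num.Theory.
Local Open Scope ring_scope.

(* Vectors in R^n are represented as functions nat -> R, with coordinates
   indexed 1..n (as in the paper); values outside 1..n are irrelevant. *)

Definition fobj (R : realFieldType) (n : nat) (c x : nat -> R) : R :=
  2^-1 * (\sum_(1 <= i < n.+1) x i) ^+ 2 - \sum_(1 <= i < n.+1) c i * x i.

Definition Usum (R : realFieldType) (u : nat -> R) (k : nat) : R :=
  \sum_(1 <= i < k.+1) u i.

Definition xk (R : realFieldType) (u : nat -> R) (k : nat) : nat -> R :=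
  fun i => if (i <= k)%N then u i else 0.

Definition Gk (R : realFieldType) (c u : nat -> R) (k : nat) : R :=
  2^-1 * (Usum u k + Usum u k.-1) - c k.

From mathcomp Require Import all_boot all_order all_algebra.
From mathcomp Require Import ring zify.
Import Order.TTheory Order.NatMonotonyTheory GRing.Theory Num.Theory.
Local Open Scope ring_scope.

(* Filling one more coordinate changes the objective by
   f(x^(k+1)) - f(x^(k)) = u_(k+1) G_(k+1), so the sign of G_(k+1) decides
   whether the sequence k |-> f(x^(k)) goes down or up at step k.  Because c is
   nonincreasing and u is positive, G is nondecreasing, so f(x^(k)) decreases
   as long as G stays negative and increases afterwards: its minimum is reached
   just before the first index where G becomes nonnegative, or at k = n if
   there is none. *)

Lemma valley_min (disp : Order.disp_t) (T : porderType disp) (F : nat -> T)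
    (m n : nat) :
  (m <= n)%N ->
  (forall j, (j < m)%N -> (F j.+1 <= F j)%O) ->
  (forall j, (m <= j < n)%N -> (F j <= F j.+1)%O) ->
  forall i, (i <= n)%N -> (F m <= F i)%O.
Proof.
move=> le_mn F_down F_up i le_in.
have [le_im | lt_mi] := leqP i m.
- apply: (nonincn_inP (D := [pred k | (k <= m)%N])); rewrite ?inE /= ?leqnn //.
  + by move=> j k _ le_km l /andP[_ lt_lk]; exact: leq_trans (ltnW lt_lk) le_km.
  + by move=> j _ lt_jm; apply: F_down.
- apply: (nondecn_inP (D := [pred k | (m <= k <= n)%N]));
    rewrite ?inE /= ?leEnat ?leqnn ?le_mn ?le_in ?(ltnW lt_mi) //.
  + move=> j k /andP[le_mj _] /andP[_ le_kn] l /andP[lt_jl lt_lk].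
    by rewrite inE (leq_trans le_mj (ltnW lt_jl)) (leq_trans (ltnW lt_lk) le_kn).
  + by move=> j /andP[le_mj _] /andP[_ lt_jn]; apply: F_up; lia.
Qed.

Lemma big_nat_if_leq (V : nmodType) (a : nat -> V) (k n : nat) : (k <= n)%N ->
  \sum_(1 <= i < n.+1) (if (i <= k)%N then a i else 0) =
  \sum_(1 <= i < k.+1) a i.
Proof.
move=> le_kn; rewrite (big_cat_nat _ (n := k.+1)) //=; try lia.
rewrite [X in _ + X]big_nat_cond [X in _ + X]big1 ?addr0; last first.
  by move=> i /andP[/andP[lt_ki _] _]; rewrite leqNgt lt_ki.
by apply: eq_big_nat => i /andP[_ lt_ik]; rewrite -ltnS lt_ik.
Qed.

Section FillingVectors.

Variables (R : realFieldType) (c u : nat -> R).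

Lemma Usum_recr k : Usum u k.+1 = Usum u k + u k.+1.
Proof. by rewrite /Usum big_nat_recr. Qed.

Lemma fobj_xk n k : (k <= n)%N ->
  fobj n c (xk u k) = 2^-1 * Usum u k ^+ 2 - \sum_(1 <= i < k.+1) c i * u i.
Proof.
move=> le_kn; rewrite /fobj /xk /Usum big_nat_if_leq //.
rewrite -(@big_nat_if_leq _ (fun i => c i * u i) _ _ le_kn).
by congr (_ - _); apply: eq_bigr => i _; case: ifP; rewrite ?mulr0.
Qed.

Lemma fobj_xkS_sub n k : (k < n)%N ->
  fobj n c (xk u k.+1) - fobj n c (xk u k) = u k.+1 * Gk c u k.+1.
Proof.
move=> lt_kn; rewrite !fobj_xk ?(ltnW lt_kn) // big_nat_recr //= /Gk Usum_recr.
by field.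
Qed.

Lemma fobj_xkS_le n k : (k < n)%N -> 0 < u k.+1 ->
  (fobj n c (xk u k.+1) <= fobj n c (xk u k)) = (Gk c u k.+1 <= 0).
Proof. by move=> lt_kn u_gt0; rewrite -subr_le0 fobj_xkS_sub // pmulr_rle0. Qed.

Lemma fobj_xk_leS n k : (k < n)%N -> 0 < u k.+1 ->
  (fobj n c (xk u k) <= fobj n c (xk u k.+1)) = (0 <= Gk c u k.+1).
Proof. by move=> lt_kn u_gt0; rewrite -subr_ge0 fobj_xkS_sub // pmulr_rge0. Qed.

Lemma GkS_sub k : (0 < k)%N ->
  Gk c u k.+1 - Gk c u k = 2^-1 * (u k + u k.+1) + (c k - c k.+1).
Proof.
case: k => // k _; rewrite /Gk /= !Usum_recr.
by ring.
Qed.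

Lemma Gk_homo n :
  (forall i, (1 <= i < n)%N -> c i.+1 <= c i) ->
  (forall i, (1 <= i <= n)%N -> 0 < u i) ->
  {in [pred k | (1 <= k <= n)%N] &, {homo Gk c u : k l / (k <= l)%N >-> k <= l}}.
Proof.
move=> c_noninc u_pos; apply: nondecn_inP.
  move=> j k /andP[j_gt0 _] /andP[_ le_kn] l /andP[lt_jl lt_lk].
  by rewrite inE (leq_trans j_gt0 (ltnW lt_jl)) (leq_trans (ltnW lt_lk) le_kn).
move=> k /andP[k_gt0 _] /andP[_ lt_kn].
rewrite -subr_ge0 GkS_sub //; apply: addr_ge0.
- by rewrite mulr_ge0 ?invr_ge0 ?ler0n ?addr_ge0 ?ltW ?u_pos //; lia.
- by rewrite subr_ge0 c_noninc //; lia.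
Qed.

End FillingVectors.

Theorem lemma1 (R : realFieldType) (n : nat) (c u : nat -> R) :
  (1 <= n)%N ->
  (forall i, (1 <= i < n)%N -> c i.+1 <= c i) ->
  0 <= c n ->
  (forall i, (1 <= i <= n)%N -> 0 < u i) ->
  (* (i) *)
  (forall nbar : nat,
     (1 <= nbar <= n)%N ->
     0 <= Gk c u nbar ->
     (forall k, (1 <= k < nbar)%N -> Gk c u k < 0) ->
     forall i, (i <= n)%N ->
       fobj n c (xk u nbar.-1) <= fobj n c (xk u i))
  /\
  (* (ii) *)
  ((forall k, (1 <= k <= n)%N -> Gk c u k < 0) ->
     forall i, (i <= n)%N -> fobj n c (xk u n) <= fobj n c (xk u i)).
Proof.
move=> _ c_noninc _ u_pos.
have G_homo := @Gk_homo _ _ _ _ c_noninc u_pos.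
split=> [nbar /andP[nbar_gt0 le_nbar_n] Gnbar_ge0 G_lt0 | G_lt0].
- apply: (@valley_min _ _ (fun k => fobj n c (xk u k))); first lia.
  + move=> j lt_j; rewrite fobj_xkS_le ?u_pos ?ltW ?G_lt0 //; lia.
  + move=> j /andP[le_j lt_jn]; rewrite fobj_xk_leS ?u_pos //.
    by apply: le_trans Gnbar_ge0 (G_homo _ _ _ _ _); rewrite ?inE; lia.
- apply: (@valley_min _ _ (fun k => fobj n c (xk u k))) => // [j lt_jn|j].
  + by rewrite fobj_xkS_le ?u_pos ?ltW ?G_lt0 //; lia.
  + by rewrite ltnNge andbN.
Qed.
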